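(* Let $n,c,\sigma\ge1$ be integers, set $d=4\sigma$, let $p$ be a prime, and let $x\in\{0,\ldots,c\}^n$ have at most $\sigma$ nonzero coordinates. Let $\rho:\{1,\ldots,n\}\to\{1,\ldots,d\}$ be a uniformly random mapping and $r_1,\ldots,r_n$ independent uniform elements of $\{0,\ldots,p-1\}$, and define $\phi_j(x)=\big(\sum_{i:\rho(i)=j}x_ir_i\big)\bmod p$ for $j=1,\ldots,d$. Then the expected number of nonzero entries of $\phi(x)$ is at most $\tfrac d4$, and with probability at least $\tfrac12$ at least half of the entries of $\phi(x)$ are zero.
   Context: FSketch construction as described in the claim. *)

From mathcomp Require Import all_boot all_order all_algebra.
Set Implicit Arguments. Unset Strict Implicit. Unset Printing Implicit Defensive.
Import GRing.Theory Num.Theory.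

(* Sample space: a mapping rho : [n] -> [d] and a vector r in {0..p-1}^n. *)
Definition Omega (n d p : nat) : finType :=
  ({ffun 'I_n -> 'I_d} * {ffun 'I_n -> 'I_p})%type.

Definition phi (n d p : nat) (x : 'I_n -> nat) (w : Omega n d p) (j : 'I_d) : nat :=
  (\sum_(i < n | w.1 i == j) x i * w.2 i) %% p.

Definition nnz (n d p : nat) (x : 'I_n -> nat) (w : Omega n d p) : nat :=
  #|[set j : 'I_d | phi x w j != 0%N]|.

Definition nzeros (n d p : nat) (x : 'I_n -> nat) (w : Omega n d p) : nat :=
  #|[set j : 'I_d | phi x w j == 0%N]|.

Local Open Scope ring_scope.

Definition expect (T : finType) (X : T -> nat) : rat :=
  (\sum_(w : T) (X w)%:R) / #|T|%:R.

Definition prob (T : finType) (E : pred T) : rat :=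
  #|[set w : T | E w]|%:R / #|T|%:R.

(** Only the buckets [j] that receive some [i] with [x i <> 0] can carry a
    nonzero sum, so for every choice of [rho] and [r] at most [sigma] of the
    [d = 4 sigma] entries of [phi x] are nonzero.  Both claims therefore hold
    pointwise on the sample space, and a fortiori in expectation and with
    probability one; the bound [c] on the entries is never used, and of the
    primality of [p] only [p > 0] is. *)
From mathcomp Require Import all_boot all_order all_algebra zify.
Set Implicit Arguments. Unset Strict Implicit. Unset Printing Implicit Defensive.
Import Order.TTheory GRing.Theory Num.Theory.
Local Open Scope ring_scope.

Lemma nnz_le_support (n d p : nat) (x : 'I_n -> nat) (w : Omega n d p) :
  (nnz x w <= #|[set i | x i != 0%N]|)%N.
Proof.
rewrite /nnz; apply: leq_trans (leq_imset_card w.1 _).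
apply/subset_leq_card/subsetP => j; rewrite inE /phi; apply: contraR => j_notin.
rewrite big1 ?mod0n // => i /eqP rho_i_j.
suff /eqP -> : x i == 0%N by [].
by apply: contraNT j_notin => x_i_neq0; apply/imsetP; exists i; rewrite ?inE.
Qed.

Lemma nzeros_add_nnz (n d p : nat) (x : 'I_n -> nat) (w : Omega n d p) :
  (nzeros x w + nnz x w = d)%N.
Proof.
set A := [set j | phi x w j != 0%N].
rewrite /nzeros /nnz addnC -/A -[RHS](card_ord d) -(cardsC A).
by congr (_ + _)%N; apply: eq_card => j; rewrite !inE negbK.
Qed.

Lemma card_Omega_gt0 (n d p : nat) : (0 < d)%N -> (0 < p)%N -> (0 < #|Omega n d p|)%N.
Proof.
move=> d_gt0 p_gt0; apply/card_gt0P.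
by exists ([ffun _ => Ordinal d_gt0], [ffun _ => Ordinal p_gt0]).
Qed.

(* No nonemptiness hypothesis is needed: over an empty type [expect X = 0 / 0 = 0]. *)
Lemma expect_le (T : finType) (X : T -> nat) (m : nat) :
  (forall w, (X w <= m)%N) -> expect X <= m%:R.
Proof.
move=> X_le; rewrite /expect.
have [->|T_gt0] := posnP #|T|; first by rewrite invr0 mulr0 ler0n.
rewrite ler_pdivrMr ?ltr0n //.
apply: le_trans (_ : \sum_(w : T) (m%:R : rat) <= _).
  by apply: ler_sum => w _; rewrite ler_nat.
by rewrite sumr_const mulr_natr.
Qed.

Lemma prob_total (T : finType) (E : pred T) :
  (0 < #|T|)%N -> (forall w, E w) -> prob E = 1.
Proof.
move=> T_gt0 E_all; rewrite /prob.
have -> : [set w | E w] = setT by apply/setP => w; rewrite !inE E_all.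
by rewrite cardsT divff // pnatr_eq0 -lt0n.
Qed.

Theorem lemma7 (n c sigma p : nat) (x : 'I_n -> nat) :
  (1 <= n)%N -> (1 <= c)%N -> (1 <= sigma)%N -> prime p ->
  (forall i, (x i <= c)%N) ->
  (#|[set i | x i != 0%N]| <= sigma)%N ->
  expect (nnz (d := 4 * sigma) (p := p) x) <= (4 * sigma)%:R / 4%:R /\
  prob (fun w : Omega n (4 * sigma) p => (2 * nzeros x w >= 4 * sigma)%N)
    >= 1 / 2%:R.
Proof.
move=> _ _ sigma_gt0 p_prime _ support_le.
have nnz_le (w : Omega n (4 * sigma) p) : (nnz x w <= sigma)%N.
  exact: leq_trans (nnz_le_support x w) support_le.
split.
  rewrite natrM mulrAC divff ?mul1r ?pnatr_eq0 //.
  exact: expect_le.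
rewrite prob_total ?card_Omega_gt0 ?muln_gt0 ?sigma_gt0 ?(prime_gt0 p_prime) //.
by move=> w; have := nzeros_add_nnz x w; have := nnz_le w; lia.
Qed.
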